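(* Fix an allocation algorithm $A$. $A$ is truthful without money and with verification for CAs with $k$-minded bidders if and only if, for every bidder $i$ and every $\mathbf b_{-i}$, the declaration graph of $A$ for $(i,\mathbf b_{-i})$ has no edge of negative weight.
   Context: Combinatorial auction setting: a set $\mathsf U$ of $m$ goods (single supply) and $n$ bidders. The true type of bidder $i$ is $t_i=(v_i,\mathcal S_i)$, where $\mathcal S_i$ is a collection of $k$ nonempty subsets of $\mathsf U$ (demanded sets) and $v_i:\mathcal S_i\to\mathbb R_{\ge0}$; $v_i$ is extended to all $S\subseteq \mathsf U$ by $v_i(S)=\max\{v_i(S'):S'\in\mathcal S_i,\ S'\subseteq S\}$ ($0$ if no such $S'$; so $v_i(\emptyset)=0$). A declaration of bidder $i$ is a pair $c=(w,\mathcal W)$ of the same form, extended the same way; $D_i$ is the set of possible declarations of $i$. For a declaration $c=(w,\mathcal W)$ and $T\subseteq\mathsf U$, $\sigma(T\mid c)$ denotes an inclusion-maximal set in $\mathcal W\cup\{\emptyset\}$ contained in $T$ with $w(\sigma(T\mid c))=w(T)$. An allocation algorithm $A$ maps a declaration profile $\mathbf b$ to pairwise disjoint sets $A_i(\mathbf b)$ and is exact: $A_i(\mathbf b)\in\mathcal W_i\cup\{\emptyset\}$ where $b_i=(w_i,\mathcal W_i)$. Verification: bidder $i$ with true type $t_i$, facing $\mathbf b_{-i}$, may declare $b_i=(z,\mathcal T)$ only if $z(A_i(b_i,\mathbf b_{-i}))\le v_i(A_i(b_i,\mathbf b_{-i}))$. $A$ is truthful without money and with verification if for all $i$, $\mathbf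 b_{-i}$, all true types $t_i\in D_i$ and all declarations $b_i\in D_i$ permitted by verification, $v_i(A_i(t_i,\mathbf b_{-i}))\ge v_i(A_i(b_i,\mathbf b_{-i}))$. Declaration graph for $(i,\mathbf b_{-i})$: vertex set $D_i$; for $a=(z,\mathcal T)$ and $c=(w,\mathcal W)$ in $D_i$, writing $\sigma(c\mid a)$ for $\sigma(A_i(c,\mathbf b_{-i})\mid a)$, there is an arc $(a,c)$ iff $z(\sigma(c\mid a))\ge w(\sigma(c\mid c))$, and its weight is $z(\sigma(a\mid a))-z(\sigma(c\mid a))$. *)

From HB Require Import structures.
From mathcomp Require Import all_boot all_order all_algebra.
Set Implicit Arguments. Unset Strict Implicit. Unset Printing Implicit Defensive.
Import Order.TTheory GRing.Theory Num.Theory.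
Local Open Scope ring_scope.

(* Goods: a finite type U.  Bidders: 'I_n.  Values in a real field R. *)

(* A declaration (w, W): W is the collection of demanded sets, w gives the
   value of each demanded set (w is canonically 0 outside W). *)
Definition decl (U : finType) (R : realFieldType) : Type :=
  ({ffun {set U} -> R} * {set {set U}})%type.

Definition kminded (U : finType) (R : realFieldType) (k : nat) (c : decl U R) : Prop :=
  [/\ #|c.2| = k,
      (forall S, S \in c.2 -> S != set0),
      (forall S, S \in c.2 -> 0 <= c.1 S) &
      (forall S, S \notin c.2 -> c.1 S = 0)].

Definition ext (U : finType) (R : realFieldType) (c : decl U R) (T : {set U}) : R :=
  \big[Num.max/0]_(S in c.2 | S \subset T) c.1 S.

Definition sigma_cand (U : finType) (R : realFieldType) (c : decl U R) (T S : {set U}) : bool :=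
  [&& S \in c.2 :|: [set set0], S \subset T & ext c S == ext c T].

Definition is_sigma (U : finType) (R : realFieldType) (c : decl U R) (T S : {set U}) : bool :=
  sigma_cand c T S &&
  [forall S' : {set U}, (sigma_cand c T S' && (S \subset S')) ==> (S' == S)].

Definition sigma (U : finType) (R : realFieldType) (c : decl U R) (T : {set U}) : {set U} :=
  odflt set0 [pick S | is_sigma c T S].

Definition profile (U : finType) (R : realFieldType) (n : nat) : Type :=
  {ffun 'I_n -> decl U R}.

Definition upd (U : finType) (R : realFieldType) (n : nat)
  (b : profile U R n) (i : 'I_n) (c : decl U R) : profile U R n :=
  [ffun j => if j == i then c else b j].

Definition alloc_alg (U : finType) (R : realFieldType) (n : nat) : Type :=
  profile U R n -> 'I_n -> {set U}.

Definition is_alloc (U : finType) (R : realFieldType) (n k : nat) (A : alloc_alg U R n) : Prop :=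
  forall b : profile U R n, (forall j, kminded k (b j)) ->
    (forall i j, i != j -> [disjoint A b i & A b j]) /\
    (forall i, A b i \in (b i).2 :|: [set set0]).

Definition truthful (U : finType) (R : realFieldType) (n k : nat) (A : alloc_alg U R n) : Prop :=
  forall (i : 'I_n) (b : profile U R n), (forall j, j != i -> kminded k (b j)) ->
  forall t c : decl U R, kminded k t -> kminded k c ->
    (* verification permits declaring c when the true type is t *)
    ext c (A (upd b i c) i) <= ext t (A (upd b i c) i) ->
    ext t (A (upd b i c) i) <= ext t (A (upd b i t) i).

Definition dg_arc (U : finType) (R : realFieldType) (n : nat) (A : alloc_alg U R n)
  (i : 'I_n) (b : profile U R n) (a c : decl U R) : Prop :=
  ext c (sigma c (A (upd b i c) i)) <= ext a (sigma a (A (upd b i c) i)).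

Definition dg_weight (U : finType) (R : realFieldType) (n : nat) (A : alloc_alg U R n)
  (i : 'I_n) (b : profile U R n) (a c : decl U R) : R :=
  ext a (sigma a (A (upd b i a) i)) - ext a (sigma a (A (upd b i c) i)).

Definition no_negative_edge (U : finType) (R : realFieldType) (n k : nat)
  (A : alloc_alg U R n) (i : 'I_n) (b : profile U R n) : Prop :=
  forall a c : decl U R, kminded k a -> kminded k c ->
    dg_arc A i b a c -> 0 <= dg_weight A i b a c.

From HB Require Import structures.
From mathcomp Require Import all_boot all_order all_algebra.
Import Order.TTheory GRing.Theory Num.Theory.
Local Open Scope ring_scope.

(* The only fact about sigma that matters is that it preserves
   value: w(sigma(T | c)) = w(T) for every declaration c and every bundle T.
   Granting this, for the declaration graph of (i, b_{-i}) the arc (a, c)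
   exists iff c(A_i(c, b_{-i})) <= a(A_i(c, b_{-i})), i.e. iff verification
   permits a bidder of true type a to declare c, and the weight of (a, c) is
   a(A_i(a, b_{-i})) - a(A_i(c, b_{-i})), which is nonnegative iff declaring
   c does not beat declaring the truth.  So "no negative edge" and
   "truthful" are literally the same inequality, quantified in the same way. *)

Section ExtendedValuation.
Variables (U : finType) (R : realFieldType).
Implicit Types (c : decl U R) (S T : {set U}).

Lemma ext_le c T x :
  0 <= x -> (forall S, S \in c.2 -> S \subset T -> c.1 S <= x) -> ext c T <= x.
Proof.
move=> x_ge0 bound; apply: (big_ind (fun y => y <= x)) => //.
- by move=> y z yx zx; rewrite ge_max yx zx.
- by move=> S /andP[]; apply: bound.
Qed.

Lemma ext_ge c T S : S \in c.2 -> S \subset T -> c.1 S <= ext c T.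
Proof.
by move=> SW ST; rewrite /ext (bigD1 S) /= ?SW ?ST // le_max lexx.
Qed.

Lemma ext_ge0 c T : 0 <= ext c T.
Proof.
by apply: (big_rec (fun y => 0 <= y)) => // S y _ y_ge0; rewrite le_max y_ge0 orbT.
Qed.

Lemma ext_mono c S T : S \subset T -> ext c S <= ext c T.
Proof.
move=> ST; apply: ext_le (ext_ge0 _ _) _ => S' S'W S'S.
exact: ext_ge (subset_trans S'S ST).
Qed.

Lemma ext_attained c T :
  ext c T = 0 \/ exists2 S, (S \in c.2) && (S \subset T) & ext c T = c.1 S.
Proof.
apply: (big_ind (fun y => y = 0 \/
          exists2 S, (S \in c.2) && (S \subset T) & y = c.1 S)) => //.
- by left.
- by move=> x y hx hy; case: leP.
- by move=> S hS; right; exists S.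
Qed.

Lemma sigma_cand_exists c T : exists S, sigma_cand c T S.
Proof.
case: (ext_attained c T) => [wT0 | [S /andP[SW ST] wTS]].
- exists set0; rewrite /sigma_cand !inE eqxx orbT sub0set /= wT0.
  by rewrite eq_le ext_ge0 andbT -wT0 ext_mono ?sub0set.
- exists S; rewrite /sigma_cand !inE SW ST /= eq_le ext_mono //= wTS.
  exact: ext_ge.
Qed.

(* A candidate of maximum cardinality is inclusion-maximal, so the chosen
   sigma(T | c) is a genuine candidate. *)
Lemma sigma_candP c T : sigma_cand c T (sigma c T).
Proof.
have [S0 candS0] := sigma_cand_exists c T.
have [S candS maxS] := @arg_maxnP _ S0 (sigma_cand c T) (fun S => #|S|) candS0.
have sigmaS : is_sigma c T S.
  rewrite /is_sigma candS; apply/forallP => S'; apply/implyP => /andP[candS' SS'].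
  by rewrite eq_sym eqEcard SS'; apply: maxS.
rewrite /sigma; case: pickP => [S' /andP[] // | /(_ S)].
by rewrite sigmaS.
Qed.

Lemma ext_sigma c T : ext c (sigma c T) = ext c T.
Proof. by have /and3P[_ _ /eqP] := sigma_candP c T. Qed.

End ExtendedValuation.

Section DeclarationGraph.
Variables (U : finType) (R : realFieldType) (n : nat).
Variables (A : alloc_alg U R n) (i : 'I_n) (b : profile U R n).

Lemma dg_arcE a c :
  dg_arc A i b a c <-> ext c (A (upd b i c) i) <= ext a (A (upd b i c) i).
Proof. by rewrite /dg_arc !ext_sigma. Qed.

Lemma dg_weightE a c :
  dg_weight A i b a c = ext a (A (upd b i a) i) - ext a (A (upd b i c) i).
Proof. by rewrite /dg_weight !ext_sigma. Qed.

End DeclarationGraph.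

Theorem proposition1 (U : finType) (R : realFieldType) (n k : nat)
  (A : alloc_alg U R n) (HA : is_alloc k A) :
  truthful k A <->
  (forall (i : 'I_n) (b : profile U R n),
     (forall j, j != i -> kminded k (b j)) -> no_negative_edge k A i b).
Proof.
split.
- move=> truthA i b kb a c ka kc /dg_arcE permitted.
  by rewrite dg_weightE subr_ge0; apply: truthA.
- move=> no_neg i b kb t c kt kc permitted.
  rewrite -subr_ge0 -dg_weightE.
  by apply: no_neg => //; apply/dg_arcE.
Qed.
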